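(* Let $p:[0,2\pi]\to[1,\infty)$ be a measurable, essentially bounded, $2\pi$-periodic, $\log$-H\''older continuous function, and let $q:[0,2\pi]\to[1,\infty)$ satisfy $\frac1{p(\theta)}+\frac1{q(\theta)}=1$ for every $\theta\in[0,2\pi]$. For $1/2<r<1$ and $z=|z|e^{i\theta}\in\mathbb{D}$ define $\varphi:[0,2\pi]\to(0,\infty)$ by $\varphi(t)=\frac{(1-|z|)^{1/q(\theta)}}{|1-|z|re^{i(t-\theta)}|}$. Then there is a constant $C>0$, independent of $r$, $z$ and $t$, such that whenever $\varphi(t)>1$ one has $\varphi(t)^{p(t)}\le C\,\varphi(t)^{p(\theta)}$.
   Context: $\mathbb{D}$ is the open unit disk. $p$ is $\log$-H\''older continuous if there is $C_{\log}>0$ with $|p(x)-p(y)|\le C_{\log}/\log(1/|x-y|)$ for all $x,y\in[0,2\pi]$. *)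

From HB Require Import structures.
From mathcomp Require Import all_boot all_order all_algebra.
From mathcomp Require Import all_classical all_reals all_analysis.
Set Implicit Arguments. Unset Strict Implicit. Unset Printing Implicit Defensive.
Import Order.TTheory GRing.Theory Num.Theory.
Import numFieldNormedType.Exports.
Local Open Scope classical_set_scope.
Local Open Scope ring_scope.

(* |1 - a e^{i alpha}| written out: sqrt((1 - a cos alpha)^2 + (a sin alpha)^2) *)
Definition abs_one_minus_exp {R : realType} (a alpha : R) : R :=
  Num.sqrt ((1 - a * cos alpha) ^+ 2 + (a * sin alpha) ^+ 2).

Definition log_holder {R : realType} (p : R -> R) : Prop :=
  exists Clog : R, 0 < Clog /\
    forall x y : R, (`[0, 2 * pi]%classic x) -> (`[0, 2 * pi]%classic y) ->
      0 < `|x - y| < 2^-1 ->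
      `|p x - p y| <= Clog / ln (`|x - y|)^-1.

(* the function phi of the statement, with z = rho e^{i theta} *)
Definition phi {R : realType} (q : R -> R) (r rho theta t : R) : R :=
  (1 - rho) `^ (q theta)^-1 / abs_one_minus_exp (rho * r) (t - theta).

From HB Require Import structures.
From mathcomp Require Import all_boot all_order all_algebra.
From mathcomp Require Import all_classical all_reals all_analysis.
From mathcomp Require Import ring lra.
Import Order.TTheory GRing.Theory Num.Theory.
Import numFieldNormedType.Exports.
Local Open Scope classical_set_scope.
Local Open Scope ring_scope.

(* Write [phi = N / D] with [N = (1 - |z|) ^ (1 / q theta) <= 1] and
   [D = |1 - |z| r e^(i (t - theta))|]; it suffices to bound
   [|p t - p theta| * (- ln D)] by a constant.  Let [delta] be the distance
   from [t - theta] to [2 pi Z].  Since [D >= |sin (t - theta)| / 2 >= delta cos 1 / 2],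
   [- ln D <= ln (2 / cos 1) + ln (1 / delta)], while log-Hoelder continuity and
   periodicity give [|p t - p theta| <= 2 C_log / ln (1 / delta)] when
   [delta <= 1/4], so the product is bounded.  When [delta >= 1/4], [D] is at least
   [1 - cos (1/4)] and [p] has bounded oscillation (chain steps of length 1/4). *)

Section trigonometry.
Context {R : realType}.
Implicit Types b d u : R.

Lemma sin2piB d : sin (2 * pi - d) = - sin d.
Proof. by rewrite addrC mulr_natl sinD2pi sinN. Qed.

Lemma cos2piB d : cos (2 * pi - d) = cos d.
Proof. by rewrite addrC mulr_natl cosD2pi cosN. Qed.

(* Mean value theorem, with [cos] decreasing on [0, 1]. *)
Lemma sin_ge_mul_cos1 b : 0 <= b <= 1 -> b * cos 1 <= sin b.
Proof.
move=> /andP[b0 b1]; have [->|b_neq0] := eqVneq b 0; first by rewrite mul0r sin0.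
have b_gt0 : 0 < b by rewrite lt_neqAle eq_sym b_neq0.
have [c] : exists2 c, c \in `]0, b[ & sin b - sin 0 = cos c * (b - 0).
  apply: MVT => //; apply: continuous_subspaceT => x; exact: continuous_sin.
rewrite in_itv /= sin0 !subr0 => /andP[c0 cb] ->; rewrite mulrC ler_wpM2r //.
have := pi_ge2 R => pi2; apply: ltW; rewrite ltr_cos ?in_itv /=; lra.
Qed.

Lemma cos_le_cos_away d u : 0 <= d <= pi -> d <= u <= 2 * pi - d -> cos u <= cos d.
Proof.
move=> /andP[d0 dpi] /andP[du ud]; have [upi|piu] := leP u pi.
  by rewrite leNgt ltr_cos ?in_itv /= -?leNgt; lra.
by rewrite -cos2piB leNgt ltr_cos ?in_itv /= -?leNgt; lra.
Qed.

Lemma ln_2_div_cos1_ge0 : 0 <= ln (2 / cos 1 : R).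
Proof.
by rewrite ln_ge0 // ler_pdivlMr ?cos1_gt0 // mul1r; have := cos_le1 (1 : R); lra.
Qed.

Lemma cos_quarter_lt1 : 0 <= cos (4^-1 : R) < 1.
Proof.
have := pi_ge2 R => pi2; rewrite cos_ge0_pihalf /=; last lra.
by rewrite -[X in _ < X]cos0 ltr_cos ?in_itv /=; lra.
Qed.

End trigonometry.

Section abs_one_minus_exp.
Context {R : realType}.
Implicit Types a al k u d e C : R.

Lemma abs_one_minus_exp_ge_re a al : `|1 - a * cos al| <= abs_one_minus_exp a al.
Proof. by rewrite -sqrtr_sqr ler_sqrt ?addr_ge0 ?sqr_ge0 // lerDl sqr_ge0. Qed.

Lemma abs_one_minus_exp_ge_im a al : `|a * sin al| <= abs_one_minus_exp a al.
Proof. by rewrite -sqrtr_sqr ler_sqrt ?addr_ge0 ?sqr_ge0 // lerDr sqr_ge0. Qed.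

Lemma abs_one_minus_expN a al : abs_one_minus_exp a (- al) = abs_one_minus_exp a al.
Proof. by rewrite /abs_one_minus_exp cosN sinN mulrN sqrrN. Qed.

Lemma abs_one_minus_exp_ge_cos a al k :
  0 <= a <= 1 -> cos al <= k -> 0 <= k -> 1 - k <= abs_one_minus_exp a al.
Proof.
move=> /andP[a0 a1] cosk k0; apply: le_trans (abs_one_minus_exp_ge_re a al).
by apply: le_trans (ler_norm _); nra.
Qed.

Lemma abs_one_minus_exp_ge_subr a al : 0 <= a -> 1 - a <= abs_one_minus_exp a al.
Proof.
move=> a0; apply: le_trans (abs_one_minus_exp_ge_re a al) => /=.
by apply: le_trans (ler_norm _); have := cos_le1 al; nra.
Qed.

Lemma abs_one_minus_exp_gt0 a al : 0 <= a < 1 -> 0 < abs_one_minus_exp a al.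
Proof.
move=> /andP[a0 a1]; apply: (lt_le_trans _ (abs_one_minus_exp_ge_subr a al a0)).
by rewrite subr_gt0.
Qed.

Lemma abs_one_minus_exp_ge_sin a al : 0 <= a < 1 -> `|sin al| / 2 <= abs_one_minus_exp a al.
Proof.
move=> /andP[a0 a1]; have := sin_max al; have [a_lt|a_ge] := ltP a 2^-1 => sin1.
  by apply: le_trans (abs_one_minus_exp_ge_subr a al a0); lra.
apply: le_trans (abs_one_minus_exp_ge_im a al).
by rewrite normrM (ger0_norm a0); have := normr_ge0 (sin al); nra.
Qed.

Lemma neg_ln_abs_one_minus_exp_le a u d : 0 <= a < 1 -> 0 < d <= 1 ->
  d * cos 1 <= `|sin u| -> - ln (abs_one_minus_exp a u) <= ln (2 / cos 1) + ln d^-1.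
Proof.
move=> a01 /andP[d0 d1] dsin; have c1 := cos1_gt0 R.
have dc_gt0 : 0 < d * cos 1 / 2 by rewrite divr_gt0 ?mulr_gt0.
have dcD : d * cos 1 / 2 <= abs_one_minus_exp a u.
  by apply: le_trans (abs_one_minus_exp_ge_sin _ u a01); rewrite ler_pM2r.
have -> : ln (2 / cos 1) + ln d^-1 = - ln (d * cos 1 / 2).
  rewrite -lnM ?posrE ?divr_gt0 ?invr_gt0 // -lnV ?posrE //.
  by congr ln; field; rewrite ?gt_eqF.
by rewrite lerN2 ler_ln ?posrE // abs_one_minus_exp_gt0.
Qed.

Lemma mul_neg_ln_abs_one_minus_exp_le a u d e C : 0 <= a < 1 -> 0 < d <= 4^-1 ->
  d * cos 1 <= `|sin u| -> 0 <= e <= C / ln d^-1 ->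
  e * - ln (abs_one_minus_exp a u) <= C * (ln (2 / cos 1) / ln 4 + 1).
Proof.
move=> a01 /andP[d0 d4] dsin /andP[e0 eC].
have ln4_gt0 : 0 < ln 4 :> R by rewrite ln_gt0 // ltr1n.
have ln4_le : ln 4 <= ln d^-1 by rewrite ler_ln ?posrE ?invr_gt0 // -[4]invrK lef_pV2 ?posrE.
have L0 : 0 < ln d^-1 := lt_le_trans ln4_gt0 ln4_le.
have A0 := @ln_2_div_cos1_ge0 R.
have C0 : 0 <= C by move: (le_trans e0 eC); rewrite pmulr_lge0 ?invr_gt0.
apply: le_trans (_ : e * (ln (2 / cos 1) + ln d^-1) <= _).
  by rewrite ler_wpM2l // neg_ln_abs_one_minus_exp_le // d0 /=; lra.
apply: le_trans (ler_wpM2r (addr_ge0 A0 (ltW L0)) eC) _.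
have -> : C / ln d^-1 * (ln (2 / cos 1) + ln d^-1) = C * (ln (2 / cos 1) / ln d^-1 + 1).
  by field; rewrite gt_eqF.
by rewrite ler_wpM2l // lerD2r ler_wpM2l // lef_pV2 ?posrE.
Qed.

Lemma mul_neg_ln_abs_one_minus_exp_away a u e P : 0 <= a < 1 ->
  4^-1 <= u <= 2 * pi - 4^-1 -> 0 <= e <= P ->
  e * - ln (abs_one_minus_exp a u) <= P * - ln (1 - cos 4^-1).
Proof.
move=> /andP[a0 a1] u_away /andP[e0 eP]; have := pi_ge2 R => pi2.
have /andP[cq0 cq1] := (@cos_quarter_lt1 R).
have cos_u : cos u <= cos 4^-1 by apply: cos_le_cos_away => //; lra.
have D_ge : 1 - cos 4^-1 <= abs_one_minus_exp a u.
  by apply: abs_one_minus_exp_ge_cos => //; rewrite a0 ltW.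
apply: le_trans (ler_wpM2r _ eP); last by rewrite oppr_ge0 ln_le0 //; lra.
by rewrite ler_wpM2l ?(le_trans e0 eP) // lerN2 ler_ln ?posrE ?subr_gt0 //;
  apply: lt_le_trans D_ge; rewrite subr_gt0.
Qed.

End abs_one_minus_exp.

Section log_holder.
Context {R : realType} {p : R -> R} {Cl : R}.
Hypothesis Cl_gt0 : 0 < Cl.
Hypothesis p_log_holder : forall x y : R,
  (`[0, 2 * pi]%classic x) -> (`[0, 2 * pi]%classic y) ->
  0 < `|x - y| < 2^-1 -> `|p x - p y| <= Cl / ln (`|x - y|)^-1.

Lemma log_holder_le x y d : 0 <= x <= 2 * pi -> 0 <= y <= 2 * pi ->
  `|x - y| <= d -> 0 < d <= 4^-1 -> `|p x - p y| <= Cl / ln d^-1.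
Proof.
move=> xI yI xyd /andP[d0 d4].
have ln_inv_gt0 (t : R) : 0 < t <= 4^-1 -> 0 < ln t^-1.
  by move=> /andP[t0 t4]; rewrite ln_gt0 // invf_gt1 //; lra.
have [->|x_neq_y] := eqVneq x y.
  by rewrite subrr normr0 divr_ge0 ?ltW ?ln_inv_gt0 ?d0.
have xy0 : 0 < `|x - y| by rewrite normr_gt0 subr_eq0.
apply: le_trans (p_log_holder _ _ _ _ _) _; rewrite /= ?in_itv ?xI ?yI ?xy0 //=; first lra.
rewrite ler_pM2l // lef_pV2 ?posrE ?ln_inv_gt0 ?d0 ?xy0 //=; try lra.
by rewrite ler_ln ?posrE ?invr_gt0 // lef_pV2 ?posrE.
Qed.

Lemma log_holder_dist0_le n x : 0 <= x <= 2 * pi -> x <= n%:R / 4 ->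
  `|p x - p 0| <= n%:R * (Cl / ln 4).
Proof.
have pi_ge0 : 0 <= 2 * pi :> R by have := pi_ge2 R; lra.
have quarter_step y z : 0 <= y <= 2 * pi -> 0 <= z <= 2 * pi -> `|y - z| <= 4^-1 ->
    `|p y - p z| <= Cl / ln 4.
  by move=> yI zI yz; rewrite -[X in ln X]invrK log_holder_le //; lra.
elim: n x => [|n IHn] x xI xn.
  have -> : x = 0 by move: xI xn; rewrite mul0r; lra.
  by rewrite subrr normr0 mul0r.
have [x_le|x_gt] := leP x 4^-1.
  apply: le_trans (quarter_step _ _ xI _ _) _; rewrite ?subr0 ?ger0_norm; try lra.
  by rewrite ler_peMl ?ler1n ?divr_ge0 ?ltW ?ln_gt0 ?ltr1n.
have yI : 0 <= x - 4^-1 <= 2 * pi by lra.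
have := IHn _ yI; rewrite -natr1 in xn *; have := quarter_step _ _ xI yI.
rewrite opprB addrC subrK ger0_norm; last lra.
move=> /(_ (lexx _)) step /(_ ltac:(lra)); rewrite mulrDl mul1r.
by have := ler_normD (p x - p (x - 4^-1)) (p (x - 4^-1) - p 0); rewrite addrA subrK; lra.
Qed.

Lemma log_holder_oscillation_bounded :
  exists P, forall x y, 0 <= x <= 2 * pi -> 0 <= y <= 2 * pi -> `|p x - p y| <= P.
Proof.
exists (64%:R * (Cl / ln 4)) => x y xI yI.
have pi4 : pi < 4 :> R by have := pihalf_lt2 R; lra.
have bound z : 0 <= z <= 2 * pi -> `|p z - p 0| <= 32%:R * (Cl / ln 4).
  by move=> zI; apply: log_holder_dist0_le => //; rewrite [32%:R]/=; lra.
have := bound _ xI; have := bound _ yI; rewrite distrC.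
have := ler_normD (p x - p 0) (p 0 - p y); rewrite addrA subrK.
have -> : 64%:R = 32%:R + 32%:R :> R by rewrite -natrD.
lra.
Qed.

Hypothesis p_2pi : p (2 * pi) = p 0.

Let kappa : R := ln (2 / cos 1) / ln 4 + 1.

Let kappa_ge0 : 0 <= kappa.
Proof. by rewrite /kappa addr_ge0 ?divr_ge0 ?ln_2_div_cos1_ge0 ?ln_ge0 ?ler1n. Qed.

Lemma log_holder_mul_neg_ln_near x y a : 0 <= y -> x <= 2 * pi -> 0 < x - y <= 4^-1 ->
  0 <= a < 1 -> `|p x - p y| * - ln (abs_one_minus_exp a (x - y)) <= Cl * kappa.
Proof.
move=> y0 x2pi /andP[u0 u4] a01; have := pi_ge2 R => pi2.
apply: (mul_neg_ln_abs_one_minus_exp_le a _ (x - y)) => //; first by rewrite u0.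
  apply: le_trans (ler_norm _); apply: sin_ge_mul_cos1; lra.
by rewrite normr_ge0 log_holder_le ?ger0_norm ?u0 //; lra.
Qed.

Lemma log_holder_mul_neg_ln_far x y a : 0 <= y -> x <= 2 * pi ->
  2 * pi - 4^-1 <= x - y <= 2 * pi -> 0 <= a < 1 ->
  `|p x - p y| * - ln (abs_one_minus_exp a (x - y)) <= 2 * Cl * kappa.
Proof.
move=> y0 x2pi /andP[du ud] a01; have := pi_ge2 R => pi2.
set d := 2 * pi - (x - y).
have [d_eq0|d_neq0] := eqVneq d 0.
  have [-> ->] : x = 2 * pi /\ y = 0 by move/eqP: d_eq0; rewrite /d; split; lra.
  by rewrite p_2pi subrr normr0 mul0r mulr_ge0 ?mulr_ge0 ?(ltW Cl_gt0).
have d_gt0 : 0 < d by rewrite lt_neqAle eq_sym d_neq0 /d; lra.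
have -> : x - y = 2 * pi - d by rewrite /d; lra.
apply: (mul_neg_ln_abs_one_minus_exp_le a _ d) => //; first by rewrite d_gt0 /d; lra.
  rewrite sin2piB normrN; apply: le_trans (ler_norm _); apply: sin_ge_mul_cos1.
  by rewrite /d; lra.
rewrite normr_ge0 /=.
have -> : p x - p y = (p x - p (2 * pi)) + (p 0 - p y) by rewrite p_2pi; ring.
have h2pi : `|p x - p (2 * pi)| <= Cl / ln d^-1.
  by rewrite log_holder_le ?d_gt0 1?distrC ?ger0_norm /d /=; lra.
have h0 : `|p 0 - p y| <= Cl / ln d^-1.
  by rewrite log_holder_le ?d_gt0 ?sub0r ?normrN ?ger0_norm /d /=; lra.
by have := ler_normD (p x - p (2 * pi)) (p 0 - p y); rewrite -mulrA; lra.
Qed.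

Lemma log_holder_mul_neg_ln_bounded : exists K, forall x y a,
  0 <= x <= 2 * pi -> 0 <= y <= 2 * pi -> 0 <= a < 1 ->
  `|p x - p y| * - ln (abs_one_minus_exp a (x - y)) <= K.
Proof.
have [P p_osc] := log_holder_oscillation_bounded.
have Cl_kappa_ge0 : 0 <= Cl * kappa := mulr_ge0 (ltW Cl_gt0) kappa_ge0.
have P_quarter_ge0 : 0 <= P * - ln (1 - cos 4^-1).
  have /andP[cq0 cq1] := @cos_quarter_lt1 R.
  have P0 : 0 <= P.
    by apply: le_trans (p_osc 0 0 _ _); rewrite ?normr_ge0 //; have := pi_ge2 R; lra.
  by rewrite mulr_ge0 // oppr_ge0 ln_le0 //; lra.
pose K := 2 * Cl * kappa + P * - ln (1 - cos 4^-1); exists K.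
suff ordered x y a : 0 <= x <= 2 * pi -> 0 <= y <= 2 * pi -> y <= x -> 0 <= a < 1 ->
    `|p x - p y| * - ln (abs_one_minus_exp a (x - y)) <= K.
  move=> x y a xI yI a01; have [yx|xy] := leP y x; first exact: ordered.
  by rewrite distrC -abs_one_minus_expN opprB; apply: ordered => //; exact: ltW.
move=> /andP[x0 x2pi] /andP[y0 y2pi] yx a01.
have [->|x_neq_y] := eqVneq x y.
  by rewrite /K subrr normr0 mul0r addr_ge0 // -mulrA mulr_ge0.
have [near|not_near] := leP (x - y) 4^-1.
  apply: le_trans (log_holder_mul_neg_ln_near _ _ _ y0 x2pi _ a01) _.
    by rewrite near subr_gt0 lt_neqAle eq_sym x_neq_y yx.
  by rewrite /K -mulrA; lra.
have [far|not_far] := leP (2 * pi - 4^-1) (x - y).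
  apply: le_trans (log_holder_mul_neg_ln_far _ _ _ y0 x2pi _ a01) _; first by rewrite far; lra.
  by rewrite /K lerDl.
have middle : 4^-1 <= x - y <= 2 * pi - 4^-1 by rewrite !ltW.
have osc : 0 <= `|p x - p y| <= P by rewrite normr_ge0 p_osc ?x0 ?y0.
apply: le_trans (mul_neg_ln_abs_one_minus_exp_away _ _ _ _ a01 middle osc) _.
by rewrite /K lerDr -mulrA mulr_ge0.
Qed.

End log_holder.

Lemma powR_le_expR_mul {R : realType} (f a b K : R) :
  0 < f -> (a - b) * ln f <= K -> f `^ a <= expR K * f `^ b.
Proof.
by move=> f_gt0 abK; rewrite /powR gt_eqF // -expRD ler_expR -lerBlDr -mulrBl.
Qed.

Lemma ln_phi_le {R : realType} (q : R -> R) r rho theta t :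
  0 <= r <= 1 -> 0 <= rho < 1 -> 0 <= q theta ->
  ln (phi q r rho theta t) <= - ln (abs_one_minus_exp (rho * r) (t - theta)).
Proof.
move=> /andP[r0 r1] /andP[rho0 rho1] q_ge0.
have D_gt0 : 0 < abs_one_minus_exp (rho * r) (t - theta).
  by apply: abs_one_minus_exp_gt0; rewrite mulr_ge0 //=; nra.
have N_gt0 : 0 < (1 - rho) `^ (q theta)^-1 by rewrite powR_gt0 // subr_gt0.
have N_le1 : (1 - rho) `^ (q theta)^-1 <= 1.
  by rewrite -[X in _ <= X](powRr0 (1 - rho)); apply: ger_powR; rewrite ?invr_ge0 //; lra.
by rewrite /phi lnM ?posrE ?invr_gt0 // lnV ?posrE // gerDr ln_le0.
Qed.

Theorem lemma2p11 (R : realType) (p q : R -> R) :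
  (forall x, (`[0, 2 * pi]%classic x) -> 1 <= p x) ->
  measurable_fun `[0, 2 * pi]%classic p ->
  (exists M : R, {ae (@lebesgue_measure R), forall x, (`[0, 2 * pi]%classic x) -> p x <= M}) ->
  (forall x, p (x + 2 * pi) = p x) ->
  log_holder p ->
  (forall x, (`[0, 2 * pi]%classic x) -> 1 <= q x) ->
  (forall x, (`[0, 2 * pi]%classic x) -> (p x)^-1 + (q x)^-1 = 1) ->
  exists C : R, 0 < C /\
    forall r rho theta t : R,
      2^-1 < r < 1 -> 0 <= rho < 1 ->
      (`[0, 2 * pi]%classic theta) -> (`[0, 2 * pi]%classic t) ->
      1 < phi q r rho theta t ->
      phi q r rho theta t `^ (p t) <= C * phi q r rho theta t `^ (p theta).
Proof.
move=> _ _ _ p_periodic [Cl [Cl_gt0 p_log_holder]] q_ge1 _.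
have p_2pi : p (2 * pi) = p 0 by rewrite -[2 * pi]add0r p_periodic.
have [K p_bounded] := log_holder_mul_neg_ln_bounded Cl_gt0 p_log_holder p_2pi.
exists (expR K); split; first exact: expR_gt0.
move=> r rho theta t /andP[r_gt r_lt1] rho01 thetaI tI phi_gt1.
apply: powR_le_expR_mul; first exact: lt_trans phi_gt1.
have ln_phi_ge0 : 0 <= ln (phi q r rho theta t) by rewrite ln_ge0 ?ltW.
apply: le_trans (ler_wpM2r ln_phi_ge0 (ler_norm _)) _.
apply: le_trans (ler_wpM2l (normr_ge0 _) (ln_phi_le q r rho theta t _ rho01 _)) _.
- by apply/andP; split; lra.
- by apply: le_trans (q_ge1 _ thetaI).
apply: p_bounded; [move: tI | move: thetaI | move: rho01 => /andP[]]; rewrite /= ?in_itv //.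
nra.
Qed.
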